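(* Let an FTTC mechanism satisfy stepwise equal-endowment equal treatment. Then for every FEE problem, the output assignment $p$ satisfies equal-endowment no envy: for all $i,j\in I$ with $\omega_i=\omega_j$, $p_i\succsim^{sd}_i p_j$ and $p_j\succsim^{sd}_j p_i$.
   Context: Fractional endowment exchange (FEE) problem: a tuple $(I,O,\succsim_I,\omega)$ where $I$ is a finite set of agents, $O$ a finite set of objects, each agent $i$ has a complete and transitive (possibly non-strict) preference relation $\succsim_i$ over $O$ with asymmetric part $\succ_i$ and symmetric part $\sim_i$, and $\omega=(\omega_{i,o})_{i\in I,o\in O}$ is an endowment matrix with $\omega_{i,o}\in[0,1]$, $\sum_{o\in O}\omega_{i,o}\le 1$ for each $i$, and $q_o=\sum_{i\in I}\omega_{i,o}$ an integer for each $o$. An assignment is a nonnegative matrix $p=(p_{i,o})$ with $\sum_i p_{i,o}\le q_o$ for all $o$ and $\sum_o p_{i,o}\le 1$ for all $i$; $p_i=(p_{i,o})_{o\in O}$ is $i$'s lottery; $\omega_i=(\omega_{i,o})_{o\in O}$. For vectors $l,l'\in\mathbb R^O_+$, $l\succsim^{sd}_i l'$ means $\sum_{o'\succsim_i o}l_{o'}\ge\sum_{o'\succsim_i o}l'_{o'}$ for all $o\in O$. FTTC (Fractional Top Trading Cycle) on the full preference domain. Initialize $\omega(0)=\omega$, $p(0)=0$, $O(0)=O$. At step $d\ge1$ (with $O(d-1)\ne\emptyset$): (i) Labeling. Put $T_0=O(d-1)$. For $k=1,2,\dots$: let $L_k$ be the set of agents $i\notin L_1\cup\dots\cup L_{k-1}$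 for which there exist $o\in T_{k-1}$ and $o'\in O\setminus(T_0\cup\dots\cup T_{k-1})$ with $p_{i,o'}(d-1)>0$ and $o\sim_i o'$; for $i\in L_k$ let $\tilde O_i(d-1)$ be the set of all such $o'$ for this $i$, and let $T_k=\bigcup_{i\in L_k}\tilde O_i(d-1)$. Stop at the first $k$ with $L_k=\emptyset$. Set $L(d-1)=\bigcup_k L_k$, $\tilde O(d-1)=\bigcup_{k\ge1}T_k$, $\overline{O}(d-1)=O(d-1)\cup\tilde O(d-1)$, and $\tilde O_i(d-1)=\emptyset$ for $i\notin L(d-1)$. (ii) Pointing. The active agents are $I(d-1)=L(d-1)\cup\{i\in I:\sum_o\omega_{i,o}(d-1)>0\}$. For $i\in I(d-1)$ let $B_i$ be the set of $\succsim_i$-maximal elements of $\overline{O}(d-1)$, let $k_i$ be the least $k\ge0$ with $B_i\cap T_k\ne\emptyset$, and let $A_i(d)=B_i\cap T_{k_i}$. (iii) Trading. The mechanism chooses (possibly depending on the history): a ratio matrix $\lambda(d)=(\lambda_{i,o}(d))_{i\in I(d-1),o\in\overline{O}(d-1)}$, nonnegative, with $\sum_{i\in I(d-1)}\lambda_{i,o}(d)=1$ for each $o\in\overline O(d-1)$, $\lambda_{i,o}(d)>0$ only if $\omega_{i,o}(d-1)>0$ (for $o\in O(d-1)$) and only if $o\in\tilde O_i(d-1)$ (for $o\in\tilde O(d-1)$); a quota matrix $\beta(d)$ on $I(d-1)\times O(d-1)$ with $0\le\beta_{i,o}(d)\le\omega_{i,o}(d-1)$; a division matrix $\gamma(d)$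 on $I(d-1)\times\overline O(d-1)$, nonnegative, with $\sum_o\gamma_{i,o}(d)=1$ and $\gamma_{i,o}(d)>0$ only if $o\in A_i(d)$. Let $x^*(d)=(x^*_a(d))_{a\in I(d-1)\cup\overline O(d-1)}$ be the maximum (componentwise largest) nonnegative solution of $x_o=\sum_{i\in I(d-1)}\gamma_{i,o}(d)x_i$ for all $o\in\overline O(d-1)$ and $x_i=\sum_{o\in\overline O(d-1)}\lambda_{i,o}(d)x_o$ for all $i\in I(d-1)$, subject to $\lambda_{i,o}(d)x_o\le\beta_{i,o}(d)$ for $o\in O(d-1)$ and $\lambda_{i,o}(d)x_o\le p_{i,o}(d-1)$ for $o\in\tilde O(d-1)$. For $i\in I(d-1)$: $\omega_{i,o}(d)=\omega_{i,o}(d-1)-\lambda_{i,o}(d)x^*_o(d)$ if $o\in O(d-1)$ and $0$ otherwise; $p_{i,o}(d)=p_{i,o}(d-1)-\mathbf 1[o\in\tilde O_i(d-1)]\lambda_{i,o}(d)x^*_o(d)+\gamma_{i,o}(d)x^*_i(d)$ (with $\gamma_{i,o}(d)=0$ for $o\notin\overline O(d-1)$). For $i\notin I(d-1)$, $\omega_i(d)=\omega_i(d-1)$, $p_i(d)=p_i(d-1)$. Let $O(d)=\{o\in O(d-1):\sum_i\omega_{i,o}(d)>0\}$. If $O(d)=\emptyset$ stop and output $p(d)$; otherwise go to step $d+1$. (Standing assumption: the maximum solution exists at each step and the procedure ends after finitely many steps.) An FTTC mechanism is specified by a rule choosing $\lambda(d),\beta(d),\gamma(d)$ at every step. Stepwise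 equal-endowment equal treatment (stepwise EEET): at every step $d$, for all $i,j\in I(d-1)$, if $\omega_i(d-1)=\omega_j(d-1)$ then $\lambda_{i,o}(d)=\lambda_{j,o}(d)$ for all $o\in O(d-1)$. *)

From HB Require Import structures.
From mathcomp Require Import all_boot all_order all_algebra.
Set Implicit Arguments. Unset Strict Implicit. Unset Printing Implicit Defensive.
Import Order.TTheory GRing.Theory Num.Theory.
Local Open Scope ring_scope.

Section FTTC.
Variables (R : realFieldType) (I O : finType) (pref : I -> rel O).
(* pref i a b  means  a ≿_i b *)

Definition indiff (i : I) (a b : O) : bool := pref i a b && pref i b a.

Definition is_FEE (om : I -> O -> R) : Prop :=
  (forall i a b, pref i a b || pref i b a) /\
  (forall i a b c, pref i a b -> pref i b c -> pref i a c) /\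
  (forall i o, 0 <= om i o <= 1) /\
  (forall i, \sum_(o : O) om i o <= 1) /\
  (forall o, exists q : nat, \sum_(i : I) om i o = q%:R).

Definition sd_ge (i : I) (l l' : O -> R) : Prop :=
  forall o, \sum_(o' : O | pref i o' o) l' o' <= \sum_(o' : O | pref i o' o) l o'.

Definition EENE (om p : I -> O -> R) : Prop :=
  forall i j, (forall o, om i o = om j o) ->
    sd_ge i (p i) (p j) /\ sd_ge j (p j) (p i).

(* ---------- (i) Labeling at a step, given p = p(d-1), Oc = O(d-1) ---------- *)
Section Labeling.
Variables (p : I -> O -> R) (Oc : {set O}).

(* candidate set of i at the next level, given T_{k-1} and T_0 ∪ ... ∪ T_{k-1} *)
Definition tildeO_at (Tprev Tcum : {set O}) (i : I) : {set O} :=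
  [set o' | (o' \notin Tcum) && (0 < p i o') && [exists o in Tprev, indiff i o o']].

(* lab k = (L_k, T_k, L_1 ∪ ... ∪ L_k, T_0 ∪ ... ∪ T_k) *)
Fixpoint lab (k : nat) : {set I} * {set O} * {set I} * {set O} :=
  match k with
  | 0 => (set0, Oc, set0, Oc)
  | k'.+1 =>
      let: (_, Tprev, Lcum, Tcum) := lab k' in
      let Lnew := [set i | (i \notin Lcum) && (tildeO_at Tprev Tcum i != set0)] in
      let Tnew := \bigcup_(i in Lnew) tildeO_at Tprev Tcum i in
      (Lnew, Tnew, Lcum :|: Lnew, Tcum :|: Tnew)
  end.

Definition Lk k : {set I} := (lab k).1.1.1.
Definition Tk k : {set O} := (lab k).1.1.2.
Definition Lcum k : {set I} := (lab k).1.2.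
Definition Tcum k : {set O} := (lab k).2.

(* At most #|I| levels are nonempty; after the first empty level all are empty. *)
Definition K : nat := #|I|.+2.

Definition Lset : {set I} := \bigcup_(k < K) Lk k.+1.
Definition tildeO : {set O} := \bigcup_(k < K) Tk k.+1.
(* tilde O_i(d-1): the o' found for i at the level where i was labeled *)
Definition tildeOi (i : I) : {set O} :=
  \bigcup_(k < K | i \in Lk k.+1) tildeO_at (Tk k) (Tcum k) i.
Definition Obar : {set O} := Oc :|: tildeO.

Definition Iact (om : I -> O -> R) : {set I} :=
  Lset :|: [set i | 0 < \sum_(o : O) om i o].

Definition Bset (i : I) : {set O} := [set o in Obar | [forall o' in Obar, pref i o o']].

Definition Aset (i : I) : {set O} :=
  [set o in Bset i | [exists k : 'I_K.+1,
      (o \in Tk k) && [forall k' : 'I_K.+1, (k' < k)%N ==> [disjoint Bset i & Tk k']]]].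

Variables (om : I -> O -> R) (lam beta gam : I -> O -> R).

Definition valid_choices : Prop :=
  (forall i o, i \in Iact om -> o \in Obar -> 0 <= lam i o) /\
  (forall o, o \in Obar -> \sum_(i in Iact om) lam i o = 1) /\
  (forall i o, i \in Iact om -> o \in Oc -> 0 < lam i o -> 0 < om i o) /\
  (forall i o, i \in Iact om -> o \in tildeO -> 0 < lam i o -> o \in tildeOi i) /\
  (forall i o, i \in Iact om -> o \in Oc -> 0 <= beta i o <= om i o) /\
  (forall i o, i \in Iact om -> o \in Obar -> 0 <= gam i o) /\
  (forall i, i \in Iact om -> \sum_(o in Obar) gam i o = 1) /\
  (forall i o, i \in Iact om -> o \in Obar -> 0 < gam i o -> o \in Aset i).

Definition is_sol (xI : I -> R) (xO : O -> R) : Prop :=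
  (forall i, i \in Iact om -> 0 <= xI i) /\
  (forall o, o \in Obar -> 0 <= xO o) /\
  (forall o, o \in Obar -> xO o = \sum_(i in Iact om) gam i o * xI i) /\
  (forall i, i \in Iact om -> xI i = \sum_(o in Obar) lam i o * xO o) /\
  (forall i o, i \in Iact om -> o \in Oc -> lam i o * xO o <= beta i o) /\
  (forall i o, i \in Iact om -> o \in tildeO -> lam i o * xO o <= p i o).

Definition is_max_sol (xI : I -> R) (xO : O -> R) : Prop :=
  is_sol xI xO /\
  forall yI yO, is_sol yI yO ->
    (forall i, i \in Iact om -> yI i <= xI i) /\
    (forall o, o \in Obar -> yO o <= xO o).

Definition fttc_step (p' om' : I -> O -> R) (Oc' : {set O}) : Prop :=
  exists (xI : I -> R) (xO : O -> R),
    is_max_sol xI xO /\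
    (forall i o, om' i o =
       if i \in Iact om then (if o \in Oc then om i o - lam i o * xO o else 0)
       else om i o) /\
    (forall i o, p' i o =
       if i \in Iact om then
         p i o - (if o \in tildeOi i then lam i o * xO o else 0)
               + (if o \in Obar then gam i o * xI i else 0)
       else p i o) /\
    Oc' = [set o in Oc | 0 < \sum_(j : I) om' j o].

Definition step_EEET : Prop :=
  forall i j, i \in Iact om -> j \in Iact om ->
    (forall o, om i o = om j o) -> forall o, o \in Oc -> lam i o = lam j o.

End Labeling.

(* A complete run of an FTTC mechanism on the problem (pref, om), ending after n
   steps: states (omS d, pS d, OS d) for d = 0..n, and the choices
   (lamS d, betaS d, gamS d) made at step d = 1..n, each satisfying
   stepwise EEET. *)
Definition FTTC_EEET_run (om : I -> O -> R) (n : nat)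
    (omS pS : nat -> I -> O -> R) (OS : nat -> {set O})
    (lamS betaS gamS : nat -> I -> O -> R) : Prop :=
  (forall i o, omS 0%N i o = om i o) /\
  (forall i o, pS 0%N i o = 0) /\
  OS 0%N = [set: O] /\
  (forall d, (d < n)%N ->
     OS d != set0 /\
     valid_choices (pS d) (OS d) (omS d) (lamS d.+1) (betaS d.+1) (gamS d.+1) /\
     step_EEET (pS d) (OS d) (omS d) (lamS d.+1) /\
     fttc_step (pS d) (OS d) (omS d) (lamS d.+1) (betaS d.+1) (gamS d.+1)
               (pS d.+1) (omS d.+1) (OS d.+1)) /\
  OS n = set0.

End FTTC.

From Pilot Require Import Defs.
From HB Require Import structures.
From mathcomp Require Import all_boot all_order all_algebra.
From mathcomp Require Import lra.
Set Implicit Arguments. Unset Strict Implicit. Unset Printing Implicit Defensive.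
Import Order.TTheory GRing.Theory Num.Theory.
Local Open Scope ring_scope.

(* Fix agents i, j with equal endowments and an object o0; let U be the upper
   contour set of o0 for j.  We show, step by step, that i holds no more of U
   than j does.  Three invariants of a run drive the argument:
   - equal endowments stay equal (stepwise EEET), so the total probabilities
     received by i and j stay equal (a step adds to an active agent exactly the
     share of its endowment it gives away; returned shares are compensated);
   - "holdings dominate Obar": every object an agent holds is weakly preferred
     by it to every object of the current Obar.  This makes Obar shrink from
     one step to the next (the labeling closure argument [Obar_shrinks]) and
     hence survives a step, since new holdings are top choices in Obar;
   - a step only moves objects of Obar.
   At a step where Obar meets U, all of j's holdings are then in U, so j's
   share of U is its total, which equals i's total.  Otherwise U is untouched. *)

Section Labeling.
Variables (R : realFieldType) (I O : finType) (pref : I -> rel O).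
Variables (p : I -> O -> R) (Oc : {set O}).

Local Notation Lk := (Lk pref p Oc).
Local Notation Tk := (Tk pref p Oc).
Local Notation Lcum := (Lcum pref p Oc).
Local Notation Tcum := (Tcum pref p Oc).
Local Notation tildeO_at := (tildeO_at pref p).
Local Notation Obar := (Obar pref p Oc).
Local Notation tildeO := (tildeO pref p Oc).
Local Notation tildeOi := (tildeOi pref p Oc).

Lemma LkS k :
  Lk k.+1 = [set i | (i \notin Lcum k) && (tildeO_at (Tk k) (Tcum k) i != set0)].
Proof. by rewrite /Defs.Lk /Defs.Lcum /Defs.Tk /Defs.Tcum /=; case: lab => [[[]]]. Qed.

Lemma TkS k : Tk k.+1 = \bigcup_(i in Lk k.+1) tildeO_at (Tk k) (Tcum k) i.
Proof. by rewrite LkS /Defs.Lk /Defs.Lcum /Defs.Tk /Defs.Tcum /=; case: lab => [[[]]]. Qed.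

Lemma LcumS k : Lcum k.+1 = Lcum k :|: Lk k.+1.
Proof. by rewrite LkS /Defs.Lk /Defs.Lcum /Defs.Tk /Defs.Tcum /=; case: lab => [[[]]]. Qed.

Lemma TcumS k : Tcum k.+1 = Tcum k :|: Tk k.+1.
Proof. by rewrite TkS LkS /Defs.Lk /Defs.Lcum /Defs.Tk /Defs.Tcum /=; case: lab => [[[]]]. Qed.

Lemma in_tildeO_at T C i o :
  (o \in tildeO_at T C i) = [&& o \notin C, 0 < p i o & [exists u in T, indiff pref i u o]].
Proof. by rewrite inE andbA. Qed.

Lemma tildeO_at_sub_Tk k i :
  i \in Lk k.+1 -> tildeO_at (Tk k) (Tcum k) i \subset Tk k.+1.
Proof. by move=> Li; rewrite TkS; apply/subsetP => o To; apply/bigcupP; exists i. Qed.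

Lemma Lk_empty k : Lk k.+1 = set0 -> Tk k.+1 = set0.
Proof. by move=> L0; rewrite TkS L0 big_set0. Qed.

Lemma Tk_empty k : Tk k = set0 -> Lk k.+1 = set0.
Proof.
move=> T0; apply/setP => i; rewrite LkS !inE; apply/negbTE/nandP; right.
apply/negPn/eqP/setP => o; rewrite in_tildeO_at T0 inE.
by apply/negbTE/negP => /and3P[_ _ /existsP[u]]; rewrite inE.
Qed.

(* Each nonempty level labels new agents, so k+1 nonempty levels label k+1 agents. *)
Lemma Lcum_card k : Lk k.+1 = set0 \/ (k.+1 <= #|Lcum k.+1|)%N.
Proof.
elim: k => [|k IH].
  case: (set_0Vmem (Lk 1)) => [->|[i Li]]; [by left | right].
  by rewrite LcumS /Defs.Lcum /= set0U card_gt0; apply/set0Pn; exists i.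
case: (set_0Vmem (Lk k.+2)) => [->|[i Li]]; [by left | right].
case: IH => [/Lk_empty/Tk_empty L0|IH]; first by move: Li; rewrite L0 inE.
rewrite LcumS cardsU.
have -> : Lcum k.+1 :&: Lk k.+2 = set0.
  by apply/setP => x; rewrite !inE LkS inE; case: (x \in Lcum k.+1).
rewrite cards0 subn0 -addn1; apply: leq_add => //.
by rewrite addn1 card_gt0; apply/set0Pn; exists i.
Qed.

Lemma Tk_big l : (#|I| < l)%N -> Tk l = set0.
Proof.
have L0 : Lk #|I|.+1 = set0.
  by case: (Lcum_card #|I|) => // /leq_trans/(_ (max_card _)); rewrite ltnn.
move=> /subnK <-; elim: (l - #|I|.+1)%N => [|m IH]; first exact: Lk_empty.
by rewrite addSn; apply/Lk_empty/Tk_empty.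
Qed.

Lemma Oc_sub_Tcum k : Oc \subset Tcum k.
Proof. by elim: k => [|k IH] //; rewrite TcumS (subset_trans IH) ?subsetUl. Qed.

Lemma TkS_fresh k o : o \in Tk k.+1 -> o \notin Tcum k.
Proof. by rewrite TkS => /bigcupP[i _]; rewrite in_tildeO_at => /andP[]. Qed.

Lemma Tk_sub_Obar l : Tk l \subset Obar.
Proof.
case: l => [|k]; first exact: subsetUl.
have [kK|] := ltnP k (K I); last first.
  by move=> Kk; rewrite Tk_big ?sub0set // ltnS (leq_trans _ Kk) // /K ltnW.
by apply/subsetP => o To; apply/setUP; right; apply/bigcupP; exists (Ordinal kK).
Qed.

Lemma Tcum_sub_Obar l : Tcum l \subset Obar.
Proof. by elim: l => [|l IH]; rewrite ?subsetUl // TcumS subUset IH Tk_sub_Obar. Qed.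

Lemma Obar_Tk o : o \in Obar -> exists l, o \in Tk l.
Proof.
by case/setUP => [Oo|/bigcupP[k _ To]]; [exists 0%N | exists k.+1].
Qed.

Lemma tildeOi_sub_tildeO i : tildeOi i \subset tildeO.
Proof.
apply/subsetP => o /bigcupP[k Lik To]; apply/bigcupP; exists k => //.
exact: subsetP (tildeO_at_sub_Tk Lik) o To.
Qed.

Lemma tildeO_notin_Oc o : o \in tildeO -> o \notin Oc.
Proof. by case/bigcupP=> k _ /TkS_fresh; apply: contra; apply/subsetP/Oc_sub_Tcum. Qed.

Lemma tildeOi_sub_Obar i : tildeOi i \subset Obar.
Proof. exact: subset_trans (tildeOi_sub_tildeO i) (subsetUr _ _). Qed.

Lemma Bset_top i o o' : o \in Bset pref p Oc i -> o' \in Obar -> pref i o o'.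
Proof. by rewrite inE => /andP[_ /forallP/(_ o')/implyP]; apply. Qed.

Lemma Aset_sub_Bset i : Aset pref p Oc i \subset Bset pref p Oc i.
Proof. by apply/subsetP => o; rewrite inE => /andP[]. Qed.

Lemma Lcum_level i l : i \in Lcum l -> exists l', i \in Lk l'.+1.
Proof.
elim: l => [|l IH]; first by rewrite inE.
by rewrite LcumS => /setUP[/IH|Li]; last exists l.
Qed.

(* An agent not yet labeled before level l who holds z indifferent to some object
   of T_l gets labeled at level l+1, which puts z into Obar. *)
Lemma indiff_closure l m u z :
  u \in Tk l -> m \notin Lcum l -> 0 < p m z -> indiff pref m u z -> z \in Obar.
Proof.
move=> Tu mL pz uz; have [zT|zT] := boolP (z \in Tcum l).
  exact: subsetP (Tcum_sub_Obar l) z zT.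
have zt : z \in tildeO_at (Tk l) (Tcum l) m.
  by rewrite in_tildeO_at zT pz; apply/existsP; exists u; rewrite Tu.
have Lm : m \in Lk l.+1 by rewrite LkS inE mL; apply/set0Pn; exists z.
exact: subsetP (Tk_sub_Obar l.+1) z (subsetP (tildeO_at_sub_Tk Lm) z zt).
Qed.

Definition holdings_dominate (B : {set O}) : Prop :=
  forall m z c, 0 < p m z -> c \in B -> pref m z c.

Hypothesis pref_trans : forall i a b c, pref i a b -> pref i b c -> pref i a c.

Lemma Obar_indiff_closed m u z : holdings_dominate Obar ->
  u \in Obar -> 0 < p m z -> indiff pref m u z -> z \in Obar.
Proof.
move=> hold uO pz uz; have [l Tu] := Obar_Tk uO.
have [mL|mL] := boolP (m \in Lcum l); last exact: indiff_closure Tu mL pz uz.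
(* m was labeled at some level l'+1 through a held w indifferent to c in T_l' *)
have [l' Lm] := Lcum_level mL.
move: Lm; rewrite LkS inE => /andP[mL' /set0Pn[w]].
rewrite in_tildeO_at => /and3P[_ pw /existsP[c /andP[Tc /andP[cw _]]]].
have cO := subsetP (Tk_sub_Obar l') c Tc.
apply: (indiff_closure Tc mL' pz); rewrite /indiff (hold _ _ _ pz cO) andbT.
by case/andP: uz => uz _; apply: pref_trans cw (pref_trans (hold _ _ _ pw uO) uz).
Qed.
End Labeling.

Lemma Obar_shrinks (R : realFieldType) (I O : finType) (pref : I -> rel O)
    (p p' : I -> O -> R) (Oc Oc' : {set O}) :
  (forall i a b c, pref i a b -> pref i b c -> pref i a c) ->
  holdings_dominate pref p (Obar pref p Oc) -> Oc' \subset Oc ->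
  (forall m z, z \notin Obar pref p Oc -> 0 < p' m z -> 0 < p m z) ->
  Obar pref p' Oc' \subset Obar pref p Oc.
Proof.
move=> pref_trans hold sOc keep.
suff Tsub k : Tk pref p' Oc' k \subset Obar pref p Oc.
  by apply/subsetP => o /Obar_Tk[l]; apply/subsetP.
elim: k => [|k IH]; first exact: subset_trans sOc (subsetUl _ _).
apply/subsetP => z; rewrite TkS => /bigcupP[m _].
rewrite in_tildeO_at => /and3P[_ pz /existsP[u /andP[Tu uz]]].
apply: contraT => zO.
have := Obar_indiff_closed pref_trans hold (subsetP IH u Tu) (keep _ _ zO pz) uz.
by rewrite (negbTE zO).
Qed.

Section Step.
Variables (R : realFieldType) (I O : finType) (pref : I -> rel O).
Variables (p : I -> O -> R) (Oc : {set O}) (om lam beta gam : I -> O -> R).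
Variables (p' om' : I -> O -> R) (Oc' : {set O}).
Hypothesis valid : valid_choices pref p Oc om lam beta gam.
Hypothesis step : fttc_step pref p Oc om lam beta gam p' om' Oc'.

Local Notation Obar := (Obar pref p Oc).
Local Notation Iact := (Iact pref p Oc om).
Local Notation tildeO := (tildeO pref p Oc).
Local Notation tildeOi := (tildeOi pref p Oc).

Lemma lam_ge0 i o : i \in Iact -> o \in Obar -> 0 <= lam i o.
Proof. by case: valid => lam_ge0 _; apply: lam_ge0. Qed.

Lemma lam_eq0_unendowed i o : i \in Iact -> o \in Oc -> om i o = 0 -> lam i o = 0.
Proof.
case: valid => _ [_ [endowed _]] Ii Oo om0.
have Ob : o \in Obar by rewrite inE Oo.
apply/eqP; rewrite eq_le lam_ge0 // andbT leNgt.
by apply/negP => /(endowed _ _ Ii Oo); rewrite om0 ltxx.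
Qed.

Lemma lam_eq0_tildeO i o : i \in Iact -> o \in tildeO -> o \notin tildeOi i -> lam i o = 0.
Proof.
case: valid => _ [_ [_ [returned _]]] Ii To Tio.
have Oo : o \in Obar by rewrite inE To orbT.
apply/eqP; rewrite eq_le lam_ge0 // andbT leNgt; apply: contra Tio; exact: returned.
Qed.

Lemma beta_le_om i o : i \in Iact -> o \in Oc -> beta i o <= om i o.
Proof.
by case: valid => _ [_ [_ [_ [beta_bounds _]]]] Ii Oo; case/andP: (beta_bounds _ _ Ii Oo).
Qed.

Lemma gam_ge0 i o : i \in Iact -> o \in Obar -> 0 <= gam i o.
Proof. by case: valid => _ [_ [_ [_ [_ [gam_ge0 _]]]]]; apply: gam_ge0. Qed.

Lemma gam_sum1 i : i \in Iact -> \sum_(o in Obar) gam i o = 1.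
Proof. by case: valid => _ [_ [_ [_ [_ [_ [gam_sum1 _]]]]]]; apply: gam_sum1. Qed.

Lemma gam_eq0_unpointed i o : i \in Iact -> o \in Obar -> o \notin Aset pref p Oc i ->
  gam i o = 0.
Proof.
case: valid => _ [_ [_ [_ [_ [_ [_ pointing]]]]]] Ii Oo Ao.
apply/eqP; rewrite eq_le gam_ge0 // andbT leNgt; apply: contra Ao; exact: pointing.
Qed.

Lemma Oc_shrinks : Oc' \subset Oc.
Proof.
by have [xI [xO [_ [_ [_ ->]]]]] := step; apply/subsetP => o; rewrite inE => /andP[].
Qed.

Lemma om_step_ge0 : (forall i o, 0 <= om i o) -> forall i o, 0 <= om' i o.
Proof.
have [xI [xO [[[_ [_ [_ [_ [lam_beta _]]]]] _] [om'E _]]]] := step.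
move=> om_ge0 i o; rewrite om'E; case: ifP => // Ii; case: ifP => // Oo.
by rewrite subr_ge0 (le_trans (lam_beta _ _ Ii Oo)) // beta_le_om.
Qed.

Lemma p_step_ge0 : (forall i o, 0 <= p i o) -> forall i o, 0 <= p' i o.
Proof.
have [xI [xO [[[xI_ge0 [_ [_ [_ [_ lam_p]]]]] _] [_ [p'E _]]]]] := step.
move=> p_ge0 i o; rewrite p'E; case: ifP => // Ii; apply: addr_ge0.
  case: ifP => [Tio|_]; rewrite ?subr0 // subr_ge0; apply: lam_p Ii _.
  exact: subsetP (tildeOi_sub_tildeO _ _ _ i) o Tio.
by case: ifP => // Oo; rewrite mulr_ge0 ?gam_ge0 ?xI_ge0.
Qed.

Lemma p_step_outside i o : o \notin Obar -> p' i o = p i o.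
Proof.
have [xI [xO [_ [_ [p'E _]]]]] := step; move=> oO; rewrite p'E (negbTE oO).
have /negbTE-> : o \notin tildeOi i by apply: contra oO; apply/subsetP/tildeOi_sub_Obar.
by rewrite subr0 addr0 if_same.
Qed.

Lemma p_step_inactive i o : i \notin Iact -> p' i o = p i o.
Proof. by have [xI [xO [_ [_ [p'E _]]]]] := step; move=> Ii; rewrite p'E (negbTE Ii). Qed.

Lemma p_step_gain m z : 0 < p' m z -> 0 < p m z \/ z \in Bset pref p Oc m.
Proof.
have [xI [xO [[[_ [xO_ge0 _]] _] [_ [p'E _]]]]] := step.
rewrite p'E; case: ifP => [Im|_]; last by left.
have [Az|Az] := boolP (z \in Aset pref p Oc m).
  by right; apply: subsetP (Aset_sub_Bset _ _ _ _) z Az.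
have -> : (if z \in Obar then gam m z * xI m else 0) = 0.
  by case: ifP => // Oz; rewrite (gam_eq0_unpointed Im Oz Az) mul0r.
rewrite addr0 => pos; left; apply: lt_le_trans pos _.
case: ifP => [Tz|_]; rewrite ?subr0 //.
have Oz := subsetP (tildeOi_sub_Obar _ _ _ m) z Tz.
by rewrite gerBl mulr_ge0 ?lam_ge0 ?xO_ge0.
Qed.

(* The total probability received by an active agent grows by what it gives away
   from its endowment: returned shares are exactly compensated. *)
Lemma total_step : exists xO : O -> R, forall k, k \in Iact ->
  \sum_o p' k o = \sum_o p k o + \sum_(o in Oc) lam k o * xO o.
Proof.
have [xI [xO [[[_ [_ [_ [xIE _]]]] _] [_ [p'E _]]]]] := step.
exists xO => k Ik.
have given : \sum_(o in Obar) lam k o * xO o =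
    \sum_(o in Oc) lam k o * xO o + \sum_(o in tildeOi k) lam k o * xO o.
  rewrite (bigID [in Oc]) /=; congr (_ + _).
    apply: eq_bigl => o; rewrite andbC.
    by case Oo: (o \in Oc); rewrite //= inE Oo.
  rewrite [LHS]big_mkcond [RHS]big_mkcond; apply: eq_bigr => o _.
  have [Tio|Tio] := boolP (o \in tildeOi k).
    have To := subsetP (tildeOi_sub_tildeO _ _ _ k) o Tio.
    by rewrite (subsetP (tildeOi_sub_Obar _ _ _ k) o Tio) /= (tildeO_notin_Oc To).
  case: ifP => // /andP[]; rewrite inE => /orP[Oo|To]; first by rewrite Oo.
  by rewrite (lam_eq0_tildeO Ik To Tio) mul0r.
have received : \sum_(o in Obar) gam k o * xI k = xI k.
  by rewrite -mulr_suml gam_sum1 ?mul1r.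
under eq_bigr do rewrite p'E Ik.
rewrite big_split sumrB /= -!big_mkcond /= received xIE // given.
lra.
Qed.

Section Endowments.
Hypothesis om_ge0 : forall i o, 0 <= om i o.

Lemma inactive_unendowed k : k \notin Iact -> forall o, om k o = 0.
Proof.
move=> Ik o; have sum0 : \sum_o om k o = 0.
  apply/eqP; rewrite eq_le sumr_ge0 ?andbT // leNgt.
  by move: Ik; rewrite !inE negb_or => /andP[].
exact: (psumr_eq0P (fun o _ => om_ge0 k o) sum0).
Qed.

Lemma unendowed_stays k : (forall o, om k o = 0) -> forall o, om' k o = 0.
Proof.
have [xI [xO [_ [om'E _]]]] := step.
move=> om0 o; rewrite om'E; case: ifP => [Ik|_]; last exact: om0.
by case: ifP => // Oo; rewrite (lam_eq0_unendowed Ik Oo) ?om0 // mul0r subr0.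
Qed.

Lemma unendowed_total k : (forall o, om k o = 0) -> \sum_o p' k o = \sum_o p k o.
Proof.
move=> om0; have [Ik|Ik] := boolP (k \in Iact); last first.
  by apply: eq_bigr => o _; rewrite p_step_inactive.
have [xO total] := total_step; rewrite total // [X in _ + X]big1 ?addr0 // => o Oo.
by rewrite (lam_eq0_unendowed Ik Oo) ?mul0r.
Qed.

Lemma equal_endowments_cases i j : (forall o, om i o = om j o) ->
  (i \in Iact) && (j \in Iact) \/ (forall o, om i o = 0) /\ (forall o, om j o = 0).
Proof.
move=> eq_ij; have [Iij|inact] := boolP ((i \in Iact) && (j \in Iact)); [by left | right].
have om_i0 o : om i o = 0.
  by case/nandP: inact => /inactive_unendowed; [|rewrite eq_ij]; apply.
by split=> // o; rewrite -eq_ij.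
Qed.

Hypothesis eeet : step_EEET pref p Oc om lam.

Lemma equal_endowments_step i j : (forall o, om i o = om j o) ->
  forall o, om' i o = om' j o.
Proof.
move=> eq_ij; have [/andP[Ii Ij]|[om_i0 om_j0] o] := equal_endowments_cases eq_ij.
  have [xI [xO [_ [om'E _]]]] := step.
  by move=> o; rewrite !om'E Ii Ij; case: ifP => // Oo; rewrite eq_ij (eeet Ii Ij eq_ij Oo).
by rewrite !unendowed_stays.
Qed.

Lemma equal_endowments_total i j : (forall o, om i o = om j o) ->
  \sum_o p' i o - \sum_o p i o = \sum_o p' j o - \sum_o p j o.
Proof.
move=> eq_ij; have [/andP[Ii Ij]|[om_i0 om_j0]] := equal_endowments_cases eq_ij.
  have [xO total] := total_step; rewrite !total // !(addrC (\sum_o p _ o)) !addrK.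
  by apply: eq_bigr => o Oo; rewrite (eeet Ii Ij eq_ij Oo).
by rewrite !unendowed_total // !subrr.
Qed.
End Endowments.

(* Holdings keep dominating the old Obar: new holdings are top choices there. *)
Lemma holdings_dominate_step :
  holdings_dominate pref p Obar -> holdings_dominate pref p' Obar.
Proof.
move=> hold m z c /p_step_gain[pz|Bz] cO; first exact: hold pz cO.
exact: Bset_top Bz cO.
Qed.
End Step.

Lemma sum_pred_le (R : numDomainType) (T : finType) (P : pred T) (F : T -> R) :
  (forall t, 0 <= F t) -> \sum_(t | P t) F t <= \sum_t F t.
Proof. by move=> F_ge0; rewrite [X in _ <= X](bigID P) /= lerDl sumr_ge0. Qed.

Section Run.
Variables (R : realFieldType) (I O : finType) (pref : I -> rel O)
    (om : I -> O -> R) (n : nat)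
    (omS pS : nat -> I -> O -> R) (OS : nat -> {set O})
    (lamS betaS gamS : nat -> I -> O -> R).
Hypothesis fee : is_FEE pref om.
Hypothesis run : FTTC_EEET_run pref om n omS pS OS lamS betaS gamS.

Local Notation Obar d := (Obar pref (pS d) (OS d)).

Lemma pref_trans i a b c : pref i a b -> pref i b c -> pref i a c.
Proof. by case: fee => _ [trans _]; apply: trans. Qed.

Lemma run_start : (forall i o, omS 0 i o = om i o) /\ (forall i o, pS 0 i o = 0).
Proof. by case: run => om0 [p0 _]. Qed.

Lemma run_step d : (d < n)%N ->
  [/\ valid_choices pref (pS d) (OS d) (omS d) (lamS d.+1) (betaS d.+1) (gamS d.+1),
      step_EEET pref (pS d) (OS d) (omS d) (lamS d.+1) &
      fttc_step pref (pS d) (OS d) (omS d) (lamS d.+1) (betaS d.+1) (gamS d.+1)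
                (pS d.+1) (omS d.+1) (OS d.+1)].
Proof. by case: run => _ [_ [_ [steps _]]] /steps[_ [? []]]. Qed.

Lemma run_om_ge0 d : (d <= n)%N -> forall i o, 0 <= omS d i o.
Proof.
elim: d => [_ i o|d IH dn]; first by rewrite run_start.1; case: fee => _ [_ [/(_ i o)/andP[]]].
by have [valid _ step] := run_step dn; apply: om_step_ge0 valid step (IH (ltnW dn)).
Qed.

Lemma run_p_ge0 d : (d <= n)%N -> forall i o, 0 <= pS d i o.
Proof.
elim: d => [_ i o|d IH dn]; first by rewrite run_start.2.
by have [valid _ step] := run_step dn; apply: p_step_ge0 valid step (IH (ltnW dn)).
Qed.

Lemma run_equal_endowments i j : (forall o, om i o = om j o) ->
  forall d, (d <= n)%N -> forall o, omS d i o = omS d j o.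
Proof.
move=> eq_ij; elim=> [_ o|d IH dn]; first by rewrite !run_start.1.
have [valid eeet step] := run_step dn.
exact: (equal_endowments_step valid step (run_om_ge0 (ltnW dn)) eeet (IH (ltnW dn))).
Qed.

Lemma run_equal_totals i j : (forall o, om i o = om j o) ->
  forall d, (d <= n)%N -> \sum_o pS d i o = \sum_o pS d j o.
Proof.
move=> eq_ij; elim=> [_|d IH dn]; first by rewrite !big1 // => o _; rewrite run_start.2.
have [valid eeet step] := run_step dn.
have := equal_endowments_total valid step (run_om_ge0 (ltnW dn)) eeet
  (run_equal_endowments eq_ij (ltnW dn)).
rewrite IH ?(ltnW dn) // => delta; lra.
Qed.

Lemma run_holdings_dominate d : (d <= n)%N -> holdings_dominate pref (pS d) (Obar d).
Proof.
elim: d => [_ m z c|d IH dn]; first by rewrite run_start.2 ltxx.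
have [valid _ step] := run_step dn; have hold := IH (ltnW dn).
have shrink : Obar d.+1 \subset Obar d.
  apply: Obar_shrinks pref_trans hold (Oc_shrinks step) _ => m z zO.
  by rewrite (p_step_outside step).
move=> m z c pz /(subsetP shrink).
exact: holdings_dominate_step valid step hold m z c pz.
Qed.

Lemma run_upper_contour i j o0 : (forall o, om i o = om j o) ->
  forall d, (d <= n)%N ->
  \sum_(o | pref j o o0) pS d i o <= \sum_(o | pref j o o0) pS d j o.
Proof.
move=> eq_ij; elim=> [_|d IH dn]; first by rewrite !big1 // => o _; rewrite run_start.2.
have [valid _ step] := run_step dn.
have [/existsP[u /andP[uO ju]]|none] := boolP [exists u in Obar d, pref j u o0].
  (* j now only holds objects it prefers to u, hence to o0 *)
  have j_upper o : ~~ pref j o o0 -> pS d.+1 j o = 0.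
    move=> jo; apply/eqP; rewrite eq_le run_p_ge0 // andbT leNgt; apply: contra jo => pos.
    apply: pref_trans ju.
    exact: holdings_dominate_step valid step (run_holdings_dominate (ltnW dn)) j o u pos uO.
  rewrite [X in _ <= X](big_rmcond _ _ j_upper) -(run_equal_totals eq_ij dn).
  by apply: sum_pred_le => o; apply: run_p_ge0.
(* otherwise the upper contour set avoids Obar, so nobody's share of it changes *)
have same k o : pref j o o0 -> pS d.+1 k o = pS d k o.
  move=> jo; apply: (p_step_outside step); apply: contraNN none => oO.
  by apply/existsP; exists o; rewrite oO.
by rewrite !(eq_bigr _ (fun o => same _ o)); apply: IH (ltnW dn).
Qed.
End Run.

Theorem proposition2 (R : realFieldType) (I O : finType) (pref : I -> rel O)
    (om : I -> O -> R) (n : nat)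
    (omS pS : nat -> I -> O -> R) (OS : nat -> {set O})
    (lamS betaS gamS : nat -> I -> O -> R) :
  is_FEE pref om ->
  FTTC_EEET_run pref om n omS pS OS lamS betaS gamS ->
  EENE pref om (pS n).
Proof.
move=> fee run i j eq_ij; split=> o0.
  by apply: (run_upper_contour fee run) => // o; rewrite eq_ij.
exact: (run_upper_contour fee run) eq_ij _ (leqnn n).
Qed.
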